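(* Let $(X,d)$ be a compact metric space and $f_{1,\infty}=\{f_n\}_{n\ge1}$ a commutative sequence of continuous self-maps of $X$. The following are equivalent: (1) $(X,f_{1,\infty})$ is weakly mixing; (2) $(\mathcal{M}(X),\widetilde{f}_{1,\infty})$ is weakly mixing; (3) $(\mathcal{M}(X),\widetilde{f}_{1,\infty})$ is topologically transitive.
   Context: The family is commutative if $f_i\circ f_j=f_j\circ f_i$ for all $i,j$. Write $f_1^n=f_n\circ\cdots\circ f_1$. $\mathcal{M}(X)$ is the space of Borel probability measures on $X$ with the weak$^*$ topology, and $\widetilde{f}_1^n(\mu)(A)=\mu((f_1^n)^{-1}(A))$ for Borel $A$. A non-autonomous system $(Y,g_{1,\infty})$ is topologically transitive if for all non-empty open $U,V$ there is $n\in\mathbb{N}$ with $g_1^n(U)\cap V\ne\emptyset$, and weakly mixing if for all non-empty open $U_1,U_2,V_1,V_2$ there is $n\in\mathbb{N}$ with $g_1^n(U_i)\cap V_i\ne\emptyset$ for $i=1,2$. *)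

From Stdlib Require Import Reals Lra Lia List.
Open Scope R_scope.

Section MetricDefs.
Variable X : Type.
Variable d : X -> X -> R.

Definition is_metric : Prop :=
  (forall x y, 0 <= d x y) /\
  (forall x y, d x y = 0 <-> x = y) /\
  (forall x y, d x y = d y x) /\
  (forall x y z, d x z <= d x y + d y z).

Definition mopen (U : X -> Prop) : Prop :=
  forall x, U x -> exists eps, 0 < eps /\ forall y, d x y < eps -> U y.

Definition mcompact : Prop :=
  forall (I : Type) (U : I -> X -> Prop),
    (forall i, mopen (U i)) -> (forall x, exists i, U i x) ->
    exists l : list I, forall x, exists i, In i l /\ U i x.

Definition mcontinuous (f : X -> X) : Prop :=
  forall x eps, 0 < eps -> exists delta, 0 < delta /\
    forall y, d x y < delta -> d (f x) (f y) < eps.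

Definition rcontinuous (g : X -> R) : Prop :=
  forall x eps, 0 < eps -> exists delta, 0 < delta /\
    forall y, d x y < delta -> Rabs (g x - g y) < eps.

Inductive borel : (X -> Prop) -> Prop :=
| borel_open : forall U, mopen U -> borel U
| borel_compl : forall A, borel A -> borel (fun x => ~ A x)
| borel_union : forall A : nat -> X -> Prop,
    (forall n, borel (A n)) -> borel (fun x => exists n, A n x).

(** Borel probability measures (a set function; its values on non-Borel
    sets are irrelevant) *)
Definition is_prob (mu : (X -> Prop) -> R) : Prop :=
  (forall A, borel A -> 0 <= mu A) /\
  mu (fun _ => True) = 1 /\
  (forall A : nat -> X -> Prop,
     (forall n, borel (A n)) ->
     (forall m n x, m <> n -> A m x -> A n x -> False) ->
     infinite_sum (fun n => mu (A n)) (mu (fun x => exists n, A n x))).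

Fixpoint finsum (n : nat) (h : nat -> R) : R :=
  match n with O => 0 | S k => finsum k h + h k end.

Definition lower_sum (mu : (X -> Prop) -> R) (g : X -> R) (r : R) : Prop :=
  exists (n : nat) (a : nat -> R) (A : nat -> X -> Prop),
    (forall i, (i < n)%nat -> borel (A i)) /\
    (forall i j x, (i < n)%nat -> (j < n)%nat -> i <> j -> A i x -> A j x -> False) /\
    (forall x, exists i, (i < n)%nat /\ A i x) /\
    (forall i x, (i < n)%nat -> A i x -> a i <= g x) /\
    r = finsum n (fun i => a i * mu (A i)).

(** I is the integral of the (bounded, Borel) function g against mu *)
Definition integral (mu : (X -> Prop) -> R) (g : X -> R) (I : R) : Prop :=
  is_lub (lower_sum mu g) I.

(** open sets of the weak* topology on M(X) *)
Definition weak_open (U : ((X -> Prop) -> R) -> Prop) : Prop :=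
  (forall mu, U mu -> is_prob mu) /\
  forall mu, U mu -> exists eps, 0 < eps /\
    exists (k : nat) (gs : nat -> X -> R),
      (forall i, (i < k)%nat -> rcontinuous (gs i)) /\
      forall nu, is_prob nu ->
        (forall i, (i < k)%nat -> forall Inu Imu,
            integral nu (gs i) Inu -> integral mu (gs i) Imu ->
            Rabs (Inu - Imu) < eps) ->
        U nu.

End MetricDefs.

Definition push {X : Type} (f : X -> X) (mu : (X -> Prop) -> R) : (X -> Prop) -> R :=
  fun A => mu (fun x => A (f x)).

(** non-autonomous compositions: g_1^n = g_n o ... o g_1 (g_0 unused) *)
Fixpoint comp {T : Type} (g : nat -> T -> T) (n : nat) : T -> T :=
  match n with
  | O => fun x => x
  | S k => fun x => g (S k) (comp g k x)
  end.

Definition top_transitive {T : Type} (isopen : (T -> Prop) -> Prop)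
  (g : nat -> T -> T) : Prop :=
  forall U V, isopen U -> isopen V -> (exists x, U x) -> (exists y, V y) ->
    exists n, (1 <= n)%nat /\ exists x, U x /\ V (comp g n x).

Definition weak_mixing {T : Type} (isopen : (T -> Prop) -> Prop)
  (g : nat -> T -> T) : Prop :=
  forall U1 U2 V1 V2, isopen U1 -> isopen U2 -> isopen V1 -> isopen V2 ->
    (exists x, U1 x) -> (exists x, U2 x) -> (exists y, V1 y) -> (exists y, V2 y) ->
    exists n, (1 <= n)%nat /\
      (exists x, U1 x /\ V1 (comp g n x)) /\
      (exists x, U2 x /\ V2 (comp g n x)).

From Pilot Require Import Defs.
From Stdlib Require Import Reals Lra Lia List ClassicalEpsilon Classical FunctionalExtensionality PropExtensionality.
Open Scope R_scope.

(* (2) => (3) holds in any space. For (1) => (2): on a compact space, a weak*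
   neighbourhood of a measure contains every atomic measure obtained by slightly moving
   and splitting the atoms of a fixed atomic approximation, since the finitely many
   test functions are uniformly continuous. Weak mixing of commuting maps yields one
   time n at which finitely many pairs of balls are all connected, and spreading the
   weights over points travelling from the j-th ball to the l-th ball gives a measure
   in U whose image lies in V, for both pairs at once. For (3) => (1): transitivity
   from a neighbourhood of delta_a to one of (delta_b + delta_c)/2, tested against tent
   functions, makes f_1^n(A) meet both B and C; applying this twice and commuting the
   maps gives weak mixing. *)

Lemma finsum_ext n h1 h2 :
  (forall i, (i < n)%nat -> h1 i = h2 i) -> finsum n h1 = finsum n h2.
Proof.
  induction n; simpl; intros H; auto.
  rewrite IHn by (intros; apply H; lia). rewrite H by lia. reflexivity.
Qed.

Lemma finsum_plus n h1 h2 :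
  finsum n (fun i => h1 i + h2 i) = finsum n h1 + finsum n h2.
Proof. induction n; simpl; [lra | rewrite IHn; lra]. Qed.

Lemma finsum_minus n h1 h2 :
  finsum n (fun i => h1 i - h2 i) = finsum n h1 - finsum n h2.
Proof. induction n; simpl; [lra | rewrite IHn; lra]. Qed.

Lemma finsum_scal n c h : finsum n (fun i => c * h i) = c * finsum n h.
Proof. induction n; simpl; [lra | rewrite IHn; lra]. Qed.

Lemma finsum_le n h1 h2 :
  (forall i, (i < n)%nat -> h1 i <= h2 i) -> finsum n h1 <= finsum n h2.
Proof.
  induction n; simpl; intros H; [lra |].
  assert (h1 n <= h2 n) by (apply H; lia).
  assert (finsum n h1 <= finsum n h2) by (apply IHn; intros; apply H; lia).
  lra.
Qed.

Lemma finsum_zero n h : (forall i, (i < n)%nat -> h i = 0) -> finsum n h = 0.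
Proof.
  intros H. rewrite (finsum_ext n h (fun _ => 0)) by auto.
  clear H. induction n; simpl; lra.
Qed.

Lemma finsum_nonneg n h : (forall i, (i < n)%nat -> 0 <= h i) -> 0 <= finsum n h.
Proof.
  intros H. rewrite <- (finsum_zero n (fun _ => 0)) by auto. apply finsum_le; auto.
Qed.

Lemma finsum_abs n h : Rabs (finsum n h) <= finsum n (fun i => Rabs (h i)).
Proof.
  induction n; simpl.
  - rewrite Rabs_R0; lra.
  - eapply Rle_trans; [apply Rabs_triang | lra].
Qed.

Lemma finsum_swap n m F :
  finsum n (fun i => finsum m (fun j => F i j)) =
  finsum m (fun j => finsum n (fun i => F i j)).
Proof.
  induction n; simpl.
  - symmetry; apply finsum_zero; auto.
  - rewrite IHn, <- finsum_plus. reflexivity.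
Qed.

Lemma finsum_split a b h :
  finsum (a + b) h = finsum a h + finsum b (fun i => h (a + i)%nat).
Proof.
  induction b.
  - rewrite Nat.add_0_r; simpl; lra.
  - rewrite Nat.add_succ_r; simpl; rewrite IHb; lra.
Qed.

(* Indices [k < N * M] enumerate the pairs [(k / M, k mod M)] in row-major order. *)
Lemma finsum_pairs N M F : (0 < M)%nat ->
  finsum (N * M) (fun k => F (k / M)%nat (k mod M)%nat) =
  finsum N (fun j => finsum M (fun l => F j l)).
Proof.
  intros HM. induction N; [reflexivity |].
  rewrite Nat.mul_succ_l, finsum_split, IHN. simpl. f_equal.
  apply finsum_ext. intros i Hi.
  rewrite <- (Nat.div_unique (N * M + i) M N i), <- (Nat.mod_unique (N * M + i) M N i) by lia.
  reflexivity.
Qed.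

Lemma finsum_single N h j0 : (j0 < N)%nat ->
  (forall j, (j < N)%nat -> j <> j0 -> h j = 0) -> finsum N h = h j0.
Proof.
  induction N; intros Hj H; [lia |]. simpl.
  destruct (Nat.eq_dec j0 N) as [-> | Hn].
  - rewrite finsum_zero; [lra |]. intros; apply H; lia.
  - rewrite IHN, (H N) by (auto; lia). lra.
Qed.

Lemma sum_f_R0_finsum s N : sum_f_R0 s N = finsum (S N) s.
Proof. induction N; simpl; [lra | rewrite IHN; simpl; lra]. Qed.

Lemma sum_f_R0_finsum_swap K (F : nat -> nat -> R) N :
  sum_f_R0 (fun n => finsum K (F n)) N = finsum K (fun k => sum_f_R0 (fun n => F n k) N).
Proof. induction N; simpl; auto. rewrite IHN, <- finsum_plus. auto. Qed.

Lemma sum_f_R0_scal c g N : sum_f_R0 (fun n => c * g n) N = c * sum_f_R0 g N.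
Proof. induction N; simpl; auto. rewrite IHN. ring. Qed.

Lemma Rabs_le_inv a b : Rabs a <= b -> -b <= a <= b.
Proof. unfold Rabs; destruct (Rcase_abs a); intros; lra. Qed.

Lemma Rabs_sub_triang a b c : Rabs (a - c) <= Rabs (a - b) + Rabs (b - c).
Proof. replace (a - c) with ((a - b) + (b - c)) by ring. apply Rabs_triang. Qed.

Lemma finsum_wavg_close K w a b eta :
  (forall k, (k < K)%nat -> 0 <= w k) -> finsum K w = 1 ->
  (forall k, (k < K)%nat -> Rabs (a k - b k) <= eta) ->
  Rabs (finsum K (fun k => w k * a k) - finsum K (fun k => w k * b k)) <= eta.
Proof.
  intros Hw H1 Hab. rewrite <- finsum_minus.
  eapply Rle_trans; [apply finsum_abs |].
  replace eta with (eta * finsum K w) by (rewrite H1; ring). rewrite <- finsum_scal.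
  apply finsum_le. intros k Hk.
  replace (w k * a k - w k * b k) with (w k * (a k - b k)) by ring.
  rewrite Rabs_mult, (Rabs_pos_eq (w k)), Rmult_comm by auto.
  apply Rmult_le_compat_r; auto.
Qed.

Lemma eventually_forall_lt K (P : nat -> nat -> Prop) :
  (forall k, (k < K)%nat -> exists Nk, forall N, (Nk <= N)%nat -> P k N) ->
  exists N0, forall k N, (k < K)%nat -> (N0 <= N)%nat -> P k N.
Proof.
  induction K; intros H.
  - exists O. intros; lia.
  - destruct IHK as [N1 H1]; [intros; apply H; lia |].
    destruct (H K ltac:(lia)) as [N2 H2].
    exists (Nat.max N1 N2). intros k N Hk HN.
    destruct (Nat.eq_dec k K) as [-> | Hn]; [apply H2 | apply H1]; lia.
Qed.

Lemma radius_forall_lt L (Q : nat -> R -> Prop) :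
  (forall m r r', Q m r -> 0 < r' <= r -> Q m r') ->
  (forall m, (m < L)%nat -> exists r, 0 < r /\ Q m r) ->
  exists r, 0 < r /\ forall m, (m < L)%nat -> Q m r.
Proof.
  intros Hmono. induction L; intros H.
  - exists 1. split; [lra | intros; lia].
  - destruct IHL as [r1 [Hr1 H1]]; [intros; apply H; lia |].
    destruct (H L ltac:(lia)) as [r2 [Hr2 H2]].
    assert (Hr : 0 < Rmin r1 r2) by (apply Rmin_glb_lt; auto).
    exists (Rmin r1 r2). split; auto. intros m Hm.
    destruct (Nat.eq_dec m L) as [-> | Hn].
    + apply (Hmono L r2); auto. split; [auto | apply Rmin_r].
    + apply (Hmono m r1); [apply H1; lia |]. split; [auto | apply Rmin_l].
Qed.

Lemma partial_choice {I T : Type} (t0 : T) (P : I -> T -> Prop) :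
  exists h : I -> T, forall i, (exists t, P i t) -> P i (h i).
Proof.
  exists (fun i => match excluded_middle_informative (exists t, P i t) with
           | left H => proj1_sig (constructive_indefinite_description _ H)
           | right _ => t0 end).
  intros i H. destruct (excluded_middle_informative (exists t, P i t)); [apply proj2_sig | tauto].
Qed.

Lemma pred_ext {X : Type} (A B : X -> Prop) : (forall x, A x <-> B x) -> A = B.
Proof.
  intros H. apply functional_extensionality. intros x. apply propositional_extensionality. auto.
Qed.

(** * Borel sets, probabilities and integrals *)

Section Measures.
Context {X : Type} (d : X -> X -> R).
Implicit Types (mu : (X -> Prop) -> R).

Lemma borel_ext (A B : X -> Prop) : borel X d A -> (forall x, A x <-> B x) -> borel X d B.
Proof. intros H E. rewrite <- (pred_ext A B E). auto. Qed.

Lemma borel_empty : borel X d (fun _ => False).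
Proof. apply borel_open. intros x []. Qed.

Lemma borel_full : borel X d (fun _ => True).
Proof. apply borel_open. intros x _. exists 1. split; auto; lra. Qed.

Lemma borel_or (A B : X -> Prop) : borel X d A -> borel X d B -> borel X d (fun x => A x \/ B x).
Proof.
  intros HA HB.
  apply (borel_ext (fun x => exists n, (match n with O => A | _ => B end) x)).
  - apply borel_union. intros [|n]; auto.
  - intros x; split.
    + intros [[|n] H]; auto.
    + intros [H | H]; [exists O | exists 1%nat]; auto.
Qed.

Lemma borel_and (A B : X -> Prop) : borel X d A -> borel X d B -> borel X d (fun x => A x /\ B x).
Proof.
  intros HA HB. apply (borel_ext (fun x => ~ (~ A x \/ ~ B x))).
  - apply borel_compl, borel_or; apply borel_compl; auto.
  - intros x; split.
    + intros H. split; apply NNPP; intros H'; apply H; auto.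
    + intros [H1 H2] [H | H]; auto.
Qed.

Lemma mopen_preimage T (A : X -> Prop) : mcontinuous X d T -> mopen X d A -> mopen X d (fun x => A (T x)).
Proof.
  intros HT HA x Hx. destruct (HA (T x) Hx) as [e [He H]].
  destruct (HT x e He) as [del [Hd H']]. exists del. split; auto.
Qed.

Lemma borel_preimage T (A : X -> Prop) : mcontinuous X d T -> borel X d A -> borel X d (fun x => A (T x)).
Proof.
  intros HT H. induction H.
  - apply borel_open, mopen_preimage; auto.
  - apply borel_compl; auto.
  - apply borel_union; auto.
Qed.

Lemma mopen_lt g b : rcontinuous X d g -> mopen X d (fun x => g x < b).
Proof.
  intros Hg x Hx. destruct (Hg x (b - g x)) as [del [Hd H]]; [lra |].
  exists del. split; auto. intros y Hy. destruct (Rabs_def2 _ _ (H y Hy)). lra.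
Qed.

Lemma prob_ext mu (A B : X -> Prop) : (forall x, A x <-> B x) -> mu A = mu B.
Proof. intros E. rewrite (pred_ext A B E). auto. Qed.

Lemma prob_nonneg mu (A : X -> Prop) : is_prob X d mu -> borel X d A -> 0 <= mu A.
Proof. intros [H _] HA. auto. Qed.

Lemma prob_empty mu : is_prob X d mu -> mu (fun _ => False) = 0.
Proof.
  intros [_ [_ Hadd]].
  specialize (Hadd (fun _ _ => False) (fun _ => borel_empty) (fun m n x _ h _ => h)).
  set (c := mu (fun _ => False)) in *.
  rewrite (prob_ext mu _ (fun _ => False)) in Hadd by firstorder. fold c in Hadd.
  destruct (Req_dec c 0) as [| Hc]; auto. exfalso.
  apply Rabs_pos_lt in Hc.
  destruct (Hadd (Rabs c / 2)) as [N HN]; [lra |].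
  pose proof (HN N ltac:(lia)) as H1. pose proof (HN (S N) ltac:(lia)) as H2.
  unfold R_dist in H1, H2. simpl in H2.
  (* consecutive partial sums differ by c but both lie within |c|/2 of c *)
  pose proof (Rabs_sub_triang (sum_f_R0 (fun _ => c) N + c) c (sum_f_R0 (fun _ => c) N)) as T.
  rewrite (Rabs_minus_sym c) in T.
  replace (sum_f_R0 (fun _ => c) N + c - sum_f_R0 (fun _ => c) N) with c in T by ring.
  lra.
Qed.

Lemma prob_inhabited mu : is_prob X d mu -> inhabited X.
Proof.
  intros Hp. apply NNPP. intros Hn. pose proof Hp as [_ [E _]].
  rewrite (prob_ext mu (fun _ => True) (fun _ => False)), prob_empty in E; [lra | auto |].
  intros x; split; [intros _; apply Hn; constructor; auto | tauto].
Qed.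

Lemma prob_finite_additive mu m C : is_prob X d mu ->
  (forall j, (j < m)%nat -> borel X d (C j)) ->
  (forall i j x, (i < m)%nat -> (j < m)%nat -> i <> j -> C i x -> C j x -> False) ->
  mu (fun x => exists j, (j < m)%nat /\ C j x) = finsum m (fun j => mu (C j)).
Proof.
  intros Hp HB HD. pose proof Hp as [_ [_ Hadd]].
  specialize (Hadd (fun n x => (n < m)%nat /\ C n x)).
  assert (Hb : forall n, borel X d (fun x => (n < m)%nat /\ C n x)).
  { intros n. destruct (Nat.lt_ge_cases n m).
    - apply (borel_ext (C n)); firstorder.
    - apply (borel_ext (fun _ => False)); [apply borel_empty | intuition lia]. }
  assert (Hsum : infinite_sum (fun n => mu (fun x => (n < m)%nat /\ C n x))
                              (finsum m (fun j => mu (C j)))).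
  { intros e He. exists m. intros N HN. unfold R_dist. rewrite sum_f_R0_finsum.
    replace (S N) with (m + (S N - m))%nat by lia.
    rewrite finsum_split, (finsum_zero (S N - m)), Rplus_0_r.
    - rewrite (finsum_ext m _ (fun j => mu (C j))), Rminus_diag, Rabs_R0; auto.
      intros i Hi. apply prob_ext. firstorder.
    - intros i Hi. rewrite <- (prob_empty mu Hp). apply prob_ext. intuition lia. }
  apply (uniqueness_sum _ _ _ (Hadd Hb ltac:(firstorder)) Hsum).
Qed.

Definition partition (n : nat) (A : nat -> X -> Prop) : Prop :=
  (forall i, (i < n)%nat -> borel X d (A i)) /\
  (forall i j x, (i < n)%nat -> (j < n)%nat -> i <> j -> A i x -> A j x -> False) /\
  (forall x, exists i, (i < n)%nat /\ A i x).

Lemma partition_trivial : partition 1 (fun _ _ => True).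
Proof.
  split; [| split].
  - intros; apply borel_full.
  - intros; lia.
  - intros x; exists O; split; auto.
Qed.

Lemma partition_preimage T m B : mcontinuous X d T -> partition m B ->
  partition m (fun j x => B j (T x)).
Proof.
  intros HT [H1 [H2 H3]]. split; [| split].
  - intros; apply borel_preimage; auto.
  - eauto.
  - intros x; apply H3.
Qed.

Lemma partition_refine N A N' B : partition N A -> partition N' B ->
  partition (N * N') (fun p x => A (p / N')%nat x /\ B (p mod N')%nat x).
Proof.
  intros [A1 [A2 A3]] [B1 [B2 B3]].
  assert (F : forall p, (p < N * N')%nat -> (p / N' < N)%nat /\ (p mod N' < N')%nat).
  { intros p Hp. assert (N' <> 0%nat) by (intros ->; lia).
    split; [apply Nat.Div0.div_lt_upper_bound; lia | apply Nat.mod_upper_bound; auto]. }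
  split; [| split].
  - intros p Hp. destruct (F p Hp). apply borel_and; auto.
  - intros p q x Hp Hq Hpq [H1 H2] [H3 H4]. destruct (F p Hp), (F q Hq).
    destruct (Nat.eq_dec (p / N') (q / N')) as [E1 | E1].
    + destruct (Nat.eq_dec (p mod N') (q mod N')) as [E2 | E2].
      * apply Hpq. rewrite (Nat.div_mod_eq p N'), (Nat.div_mod_eq q N'), E1, E2. auto.
      * eapply B2; [| | apply E2 | apply H2 | apply H4]; auto.
    + eapply A2; [| | apply E1 | apply H1 | apply H3]; auto.
  - intros x. destruct (A3 x) as [i [Hi Hx]], (B3 x) as [j [Hj Hy]].
    exists (i * N' + j)%nat. split; [nia |].
    rewrite <- (Nat.div_unique (i * N' + j) N' i j), <- (Nat.mod_unique (i * N' + j) N' i j) by lia.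
    auto.
Qed.

Lemma prob_partition_decomp mu m B (A : X -> Prop) : is_prob X d mu -> partition m B -> borel X d A ->
  mu A = finsum m (fun j => mu (fun x => A x /\ B j x)).
Proof.
  intros Hp [HB [HD HC]] HA. rewrite <- prob_finite_additive; auto.
  - apply prob_ext. intros x; split.
    + intros Hx. destruct (HC x) as [j [Hj Hx']]. eauto.
    + firstorder.
  - intros; apply borel_and; auto.
  - intros i j x Hi Hj Hij [_ H1] [_ H2]. eauto.
Qed.

Lemma prob_partition_total mu m B : is_prob X d mu -> partition m B ->
  finsum m (fun j => mu (B j)) = 1.
Proof.
  intros Hp HB. pose proof Hp as [_ [H1 _]]. rewrite <- H1.
  rewrite (prob_partition_decomp mu m B (fun _ => True)); auto using borel_full.
  apply finsum_ext. intros. apply prob_ext. firstorder.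
Qed.

(* Both sides are compared cell by cell on the common refinement of the two partitions. *)
Lemma step_sum_le mu n A a m B b : is_prob X d mu -> partition n A -> partition m B ->
  (forall i j x, (i < n)%nat -> (j < m)%nat -> A i x -> B j x -> a i <= b j) ->
  finsum n (fun i => a i * mu (A i)) <= finsum m (fun j => b j * mu (B j)).
Proof.
  intros Hp HA HB H.
  rewrite (finsum_ext n _ (fun i => finsum m (fun j => a i * mu (fun x => A i x /\ B j x)))).
  2:{ intros i Hi. rewrite (prob_partition_decomp mu m B (A i)), <- finsum_scal;
      auto. apply HA; auto. }
  rewrite (finsum_ext m (fun j => b j * mu (B j))
             (fun j => finsum n (fun i => b j * mu (fun x => A i x /\ B j x)))).
  2:{ intros j Hj. rewrite (prob_partition_decomp mu n A (B j)), <- finsum_scal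
        by (auto; apply HB; auto).
      apply finsum_ext. intros. f_equal. apply prob_ext. firstorder. }
  rewrite finsum_swap. apply finsum_le. intros j Hj. apply finsum_le. intros i Hi.
  destruct (classic (exists x, A i x /\ B j x)) as [[x [H1 H2]] | Hn].
  - apply Rmult_le_compat_r; eauto.
    apply prob_nonneg, borel_and; auto; [apply HA | apply HB]; auto.
  - rewrite (prob_ext mu _ (fun _ => False)), prob_empty by (auto; firstorder). lra.
Qed.

End Measures.

Section Integrals.
Context {X : Type} (d : X -> X -> R).
Implicit Types (mu : (X -> Prop) -> R).

Lemma lower_sum_le mu g M : is_prob X d mu -> (forall x, g x <= M) ->
  forall r, lower_sum X d mu g r -> r <= M.
Proof.
  intros Hp HM r [n [a [A [H1 [H2 [H3 [H4 ->]]]]]]].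
  eapply Rle_trans.
  - apply (step_sum_le d mu n A a 1 (fun _ _ => True) (fun _ => M));
      [auto | split; auto | apply partition_trivial |].
    intros i j x Hi Hj Ha _. eapply Rle_trans; [apply (H4 i x) | apply HM]; auto.
  - simpl. pose proof Hp as [_ [E _]]. rewrite E. lra.
Qed.

Lemma integral_exists mu g M : is_prob X d mu -> (forall x, Rabs (g x) <= M) ->
  exists I, integral X d mu g I.
Proof.
  intros Hp HM. assert (Hg : forall x, -M <= g x <= M) by (intros; apply Rabs_le_inv; auto).
  destruct (completeness (lower_sum X d mu g)) as [I HI].
  - exists M. intros r Hr. apply (lower_sum_le mu g M); auto. intros x. apply Hg.
  - exists (finsum 1 (fun _ => -M * mu (fun _ => True))).
    exists 1%nat, (fun _ => -M), (fun _ _ => True).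
    destruct (partition_trivial d) as [A1 [A2 A3]].
    repeat split; auto. intros i x _ _. apply Hg.
  - exists I. auto.
Qed.

(* If [g] stays within [eta] of [c j] on each cell [A j], the step sums [c j -/+ eta]
   bound the integral from below and above. *)
Lemma integral_near_step mu g N A c eta : is_prob X d mu -> partition d N A ->
  (forall j y, (j < N)%nat -> A j y -> Rabs (g y - c j) <= eta) ->
  forall I, integral X d mu g I -> Rabs (I - finsum N (fun j => c j * mu (A j))) <= eta.
Proof.
  intros Hp HA Hc I [Hub Hlub].
  pose proof (prob_partition_total d mu N A Hp HA) as Tot.
  assert (L : finsum N (fun j => (c j - eta) * mu (A j)) <= I).
  { apply Hub. exists N, (fun j => c j - eta), A. destruct HA as [A1 [A2 A3]].
    repeat split; auto. intros i x Hi Hx. pose proof (Rabs_le_inv _ _ (Hc i x Hi Hx)). lra. }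
  assert (U : I <= finsum N (fun j => (c j + eta) * mu (A j))).
  { apply Hlub. intros r [n [a [B [H1 [H2 [H3 [H4 ->]]]]]]].
    apply (step_sum_le d); auto; [split; auto |].
    intros i j x Hi Hj Hb Ha. specialize (H4 i x Hi Hb).
    pose proof (Rabs_le_inv _ _ (Hc j x Hj Ha)). lra. }
  rewrite (finsum_ext N _ (fun j => c j * mu (A j) - eta * mu (A j))) in L by (intros; ring).
  rewrite (finsum_ext N _ (fun j => c j * mu (A j) + eta * mu (A j))) in U by (intros; ring).
  rewrite finsum_minus, finsum_scal, Tot in L. rewrite finsum_plus, finsum_scal, Tot in U.
  apply Rabs_le. lra.
Qed.

Lemma integral_add_push_le1 mu T g h I1 I2 : is_prob X d mu -> mcontinuous X d T ->
  (forall x, g x + h (T x) <= 1) -> integral X d mu g I1 ->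
  integral X d (fun A => mu (fun x => A (T x))) h I2 -> I1 + I2 <= 1.
Proof.
  intros Hp HT Hgh [_ HI1] [_ HI2].
  assert (I2 <= 1 - I1); [| lra].
  apply HI2. intros r2 [m [b [B [H1 [H2 [H3 [H4 ->]]]]]]].
  assert (HB : partition d m (fun j x => B j (T x)))
    by (apply partition_preimage; auto; split; auto).
  assert (I1 <= 1 - finsum m (fun i => b i * mu (fun x => B i (T x)))); [| lra].
  apply HI1. intros r [n [a [A [G1 [G2 [G3 [G4 ->]]]]]]].
  rewrite <- (prob_partition_total d mu m _ Hp HB), <- finsum_minus.
  rewrite (finsum_ext m _ (fun j => (1 - b j) * mu (fun x => B j (T x)))) by (intros; ring).
  apply (step_sum_le d mu n A a m _ _ Hp); auto; [split; auto |].
  intros i j x Hi Hj Ha Hb.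
  specialize (G4 i x Hi Ha). specialize (H4 j (T x) Hj Hb). specialize (Hgh x). lra.
Qed.

End Integrals.

Lemma INR_floor N t : 0 <= t < INR N -> exists j, (j < N)%nat /\ INR j <= t < INR j + 1.
Proof.
  induction N; intros Ht; [simpl in Ht; lra |]. rewrite S_INR in Ht.
  destruct (Rlt_or_le t (INR N)).
  - destruct IHN as [j [Hj H']]; [lra |]. exists j. split; auto.
  - exists N. split; auto. lra.
Qed.

Lemma INR_le_list_sum l m :
  In m l -> INR m <= fold_right (fun m acc => INR m + acc) 0 l.
Proof.
  induction l as [| a l IH]; simpl; [tauto |].
  assert (0 <= fold_right (fun m acc => INR m + acc) 0 l).
  { clear. induction l; simpl; [lra |]. pose proof (pos_INR a). lra. }
  pose proof (pos_INR a). intros [-> | Hin]; [lra |]. specialize (IH Hin). lra.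
Qed.

Section Compactness.
Context {X : Type} (d : X -> X -> R).
Implicit Types (mu : (X -> Prop) -> R).

Lemma mcompact_rcontinuous_bounded g : mcompact X d -> rcontinuous X d g ->
  exists M, forall x, Rabs (g x) <= M.
Proof.
  intros Hc Hg.
  destruct (Hc nat (fun m x => Rabs (g x) < INR m)) as [l Hl].
  - intros m x Hx. destruct (Hg x (INR m - Rabs (g x))) as [del [Hd H]]; [lra |].
    exists del. split; auto. intros y Hy.
    pose proof (Rabs_triang (g y - g x) (g x)).
    specialize (H y Hy). rewrite Rabs_minus_sym in H.
    replace (g y - g x + g x) with (g y) in * by ring. lra.
  - intros x. destruct (INR_unbounded (Rabs (g x))) as [m Hm]. exists m. lra.
  - exists (fold_right (fun m acc => INR m + acc) 0 l). intros x.
    destruct (Hl x) as [i [Hi Hx]]. pose proof (INR_le_list_sum l i Hi). lra.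
Qed.

(* Cells are the level sets [-M + j eta <= g < -M + (j+1) eta]. *)
Lemma level_partition g M eta : rcontinuous X d g -> (forall x, Rabs (g x) <= M) -> 0 < eta ->
  exists N B, partition d N B /\
    forall j x y, (j < N)%nat -> B j x -> B j y -> Rabs (g x - g y) <= eta.
Proof.
  intros Hg HM He. destruct (INR_unbounded (2 * M / eta)) as [N HN].
  exists N, (fun j x => -M + INR j * eta <= g x /\ g x < -M + (INR j + 1) * eta).
  split; [split; [| split] |].
  - intros i Hi. apply borel_and; [| apply borel_open, mopen_lt; auto].
    apply (borel_ext d (fun x => ~ (g x < -M + INR i * eta))); [| intros x; lra].
    apply borel_compl, borel_open, mopen_lt; auto.
  - intros i j x Hi Hj Hij [H1 H2] [H3 H4].
    destruct (Nat.lt_total i j) as [Hl | [Hl | Hl]]; [| contradiction |].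
    + assert (INR i + 1 <= INR j) by (rewrite <- S_INR; apply le_INR; lia). nra.
    + assert (INR j + 1 <= INR i) by (rewrite <- S_INR; apply le_INR; lia). nra.
  - intros x. pose proof (Rabs_le_inv _ _ (HM x)) as Hx.
    assert (Hinv : 0 < / eta) by (apply Rinv_0_lt_compat; auto).
    destruct (INR_floor N ((g x + M) / eta)) as [j [Hj [Ht1 Ht2]]].
    { split; [apply Rmult_le_pos; lra |].
      apply Rle_lt_trans with (2 * M / eta); auto.
      apply Rmult_le_compat_r; lra. }
    exists j. split; auto.
    assert (E : (g x + M) / eta * eta = g x + M) by (field; lra).
    apply Rmult_le_compat_r with (r := eta) in Ht1; [| lra].
    apply Rmult_lt_compat_r with (r := eta) in Ht2; [| lra].
    lra.
  - intros j x y Hj [H1 H2] [H3 H4]. apply Rabs_le. lra.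
Qed.

Lemma uniform_partition k (gs : nat -> X -> R) eta : 0 < eta ->
  (forall i, (i < k)%nat -> rcontinuous X d (gs i)) ->
  (forall i, (i < k)%nat -> exists M, forall x, Rabs (gs i x) <= M) ->
  exists N A, partition d N A /\
    forall i j x y, (i < k)%nat -> (j < N)%nat -> A j x -> A j y -> Rabs (gs i x - gs i y) <= eta.
Proof.
  intros He. induction k as [| k IH]; intros Hc Hb.
  - exists 1%nat, (fun _ _ => True). split; [apply partition_trivial | intros; lia].
  - destruct IH as [N [A [HA HA']]]; [intros; apply Hc; lia | intros; apply Hb; lia |].
    destruct (Hb k ltac:(lia)) as [M HM].
    destruct (level_partition (gs k) M eta) as [N' [B [HB HB']]]; auto.
    exists (N * N')%nat, (fun p x => A (p / N')%nat x /\ B (p mod N')%nat x).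
    split; [apply partition_refine; auto |].
    intros i p x y Hi Hp [H1 H2] [H3 H4]. assert (N' <> 0%nat) by (intros ->; lia).
    destruct (Nat.eq_dec i k) as [-> | Hik].
    + apply (HB' (p mod N')%nat); auto. apply Nat.mod_upper_bound; auto.
    + apply (HA' i (p / N')%nat); auto; [lia |]. apply Nat.Div0.div_lt_upper_bound. lia.
Qed.

Lemma integral_weighted_points mu k gs eta : is_prob X d mu -> 0 < eta ->
  (forall i, (i < k)%nat -> rcontinuous X d (gs i)) ->
  (forall i, (i < k)%nat -> exists M, forall x, Rabs (gs i x) <= M) ->
  exists N xs w, (forall j, (j < N)%nat -> 0 <= w j) /\ finsum N w = 1 /\
    forall i I, (i < k)%nat -> integral X d mu (gs i) I ->
      Rabs (I - finsum N (fun j => w j * gs i (xs j))) <= eta.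
Proof.
  intros Hp He Hc Hb. destruct (prob_inhabited d mu Hp) as [x0].
  destruct (uniform_partition k gs eta He Hc Hb) as [N [A [HA HA']]].
  destruct (partial_choice x0 A) as [xs Hxs].
  exists N, xs, (fun j => mu (A j)). split; [| split].
  - intros j Hj. apply (prob_nonneg d); auto. apply HA; auto.
  - apply (prob_partition_total d mu N A Hp HA).
  - intros i I Hi HI.
    rewrite (finsum_ext N _ (fun j => gs i (xs j) * mu (A j))) by (intros; ring).
    apply (integral_near_step d mu (gs i) N A); auto.
    intros j y Hj Hy. apply (HA' i j); eauto.
Qed.

End Compactness.

(** * Atomic measures *)

Lemma Req_of_close a b : (forall eta, 0 < eta -> Rabs (a - b) <= eta) -> a = b.
Proof.
  intros H. apply NNPP. intros Hn.
  assert (Hpos : 0 < Rabs (a - b)) by (apply Rabs_pos_lt; lra).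
  specialize (H (Rabs (a - b) / 2) ltac:(lra)). lra.
Qed.

Definition ind (P : Prop) : R := if excluded_middle_informative P then 1 else 0.

Lemma ind_true (P : Prop) : P -> ind P = 1.
Proof. unfold ind. destruct (excluded_middle_informative P); tauto. Qed.

Lemma ind_false (P : Prop) : ~ P -> ind P = 0.
Proof. unfold ind. destruct (excluded_middle_informative P); tauto. Qed.

Lemma ind_bounds (P : Prop) : 0 <= ind P <= 1.
Proof. unfold ind. destruct (excluded_middle_informative P); lra. Qed.

Lemma sum_f_R0_ind_disjoint {X : Type} (A : nat -> X -> Prop) y n0 : A n0 y ->
  (forall m n x, m <> n -> A m x -> A n x -> False) ->
  forall N, sum_f_R0 (fun n => ind (A n y)) N = ind (n0 <= N)%nat.
Proof.
  intros H0 HD.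
  assert (Hother : forall n, n <> n0 -> ind (A n y) = 0)
    by (intros n Hn; apply ind_false; intros H; eapply HD; eauto).
  induction N; simpl.
  - destruct (Nat.eq_dec n0 0) as [-> | Hn].
    + rewrite !ind_true; auto.
    + rewrite Hother, ind_false; auto. lia.
  - rewrite IHN. destruct (Nat.lt_total n0 (S N)) as [Hl | [-> | Hl]].
    + rewrite Hother, !ind_true by lia. lra.
    + rewrite ind_false, !ind_true by (auto || lia). lra.
    + rewrite Hother, !ind_false by lia. lra.
Qed.

(* The finitely supported measure [sum_k w k * delta_(z k)]. *)
Definition atomic {X : Type} (K : nat) (w : nat -> R) (z : nat -> X) : (X -> Prop) -> R :=
  fun A => finsum K (fun k => w k * ind (A (z k))).

Section Atomic.
Context {X : Type} (d : X -> X -> R).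

Lemma atomic_prob K w z : (forall k, (k < K)%nat -> 0 <= w k) -> finsum K w = 1 ->
  is_prob X d (atomic K w z).
Proof.
  intros Hw H1. split; [| split].
  - intros A _. apply finsum_nonneg. intros k Hk.
    pose proof (ind_bounds (A (z k))). specialize (Hw k Hk). nra.
  - unfold atomic. rewrite <- H1. apply finsum_ext. intros. rewrite ind_true; auto. ring.
  - intros A _ HD. unfold atomic.
    assert (HK : forall k, (k < K)%nat -> exists Nk, forall N, (Nk <= N)%nat ->
              sum_f_R0 (fun n => ind (A n (z k))) N = ind (exists n, A n (z k))).
    { intros k Hk. destruct (classic (exists n, A n (z k))) as [[n0 Hn0] | Hn].
      - exists n0. intros N HN.
        rewrite (sum_f_R0_ind_disjoint A (z k) n0), !ind_true; eauto.
      - exists O. intros N _. rewrite ind_false; auto.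
        induction N; simpl; [| rewrite IHN]; rewrite ind_false; eauto; lra. }
    destruct (eventually_forall_lt K _ HK) as [N0 HN0].
    intros e He. exists N0. intros N HN. unfold R_dist.
    rewrite sum_f_R0_finsum_swap.
    rewrite (finsum_ext K _ (fun k => w k * ind (exists n, A n (z k)))).
    + rewrite Rminus_diag, Rabs_R0. auto.
    + intros k Hk. rewrite sum_f_R0_scal, HN0; auto.
Qed.

Lemma finsum_partition_ind N B y c v eta : partition d N B ->
  (forall j, (j < N)%nat -> B j y -> Rabs (c j - v) <= eta) ->
  Rabs (finsum N (fun j => c j * ind (B j y)) - v) <= eta.
Proof.
  intros [_ [HD HC]] H. destruct (HC y) as [j0 [Hj0 Hy]].
  rewrite (finsum_single N _ j0), ind_true, Rmult_1_r; auto.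
  intros j Hj Hn. rewrite ind_false; [ring |]. intros Hb. eapply HD; eauto.
Qed.

Lemma integral_atomic K w z g M : (forall k, (k < K)%nat -> 0 <= w k) -> finsum K w = 1 ->
  rcontinuous X d g -> (forall x, Rabs (g x) <= M) ->
  forall I, integral X d (atomic K w z) g I -> I = finsum K (fun k => w k * g (z k)).
Proof.
  intros Hw H1 Hg HM I HI. pose proof (atomic_prob K w z Hw H1) as Hp.
  destruct (prob_inhabited d _ Hp) as [x0].
  apply Req_of_close. intros eta He.
  destruct (level_partition d g M (eta / 2) Hg HM ltac:(lra)) as [N [B [HB HB']]].
  destruct (partial_choice x0 B) as [xs Hxs].
  set (S := finsum K (fun k => w k * finsum N (fun j => g (xs j) * ind (B j (z k))))).
  assert (Hstep : Rabs (I - S) <= eta / 2).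
  { replace S with (finsum N (fun j => g (xs j) * atomic K w z (B j))).
    - apply (integral_near_step d _ g N B); auto.
      intros j y Hj Hy. apply (HB' j); eauto.
    - unfold S, atomic.
      rewrite (finsum_ext N _ (fun j => finsum K (fun k => w k * (g (xs j) * ind (B j (z k)))))).
      + rewrite finsum_swap. apply finsum_ext. intros. rewrite <- finsum_scal. auto.
      + intros. rewrite <- finsum_scal. apply finsum_ext. intros; ring. }
  assert (Hpts : Rabs (S - finsum K (fun k => w k * g (z k))) <= eta / 2).
  { apply finsum_wavg_close; auto. intros k Hk. apply finsum_partition_ind; auto.
    intros j Hj Hb. rewrite Rabs_minus_sym. apply (HB' j); eauto. }
  pose proof (Rabs_sub_triang I S (finsum K (fun k => w k * g (z k)))). lra.
Qed.

End Atomic.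

Section AtomicNeighbourhoods.
Context {X : Type} (d : X -> X -> R).

(* Every atomic measure obtained by moving the atoms [x j] of [sum_j w j delta_(x j)]
   by less than [r] and splitting their weights lies in [U]: atom [z k] comes from
   [x (pi k)], and the identity over all [F] says that the weights [w'] of the atoms
   coming from [x j] add up to [w j]. *)
Definition atomic_nbhd (U : ((X -> Prop) -> R) -> Prop) N (x : nat -> X) w r : Prop :=
  (forall j, (j < N)%nat -> 0 <= w j) /\ finsum N w = 1 /\ 0 < r /\
  forall K w' z (pi : nat -> nat), (forall k, (k < K)%nat -> 0 <= w' k) ->
    (forall k, (k < K)%nat -> (pi k < N)%nat /\ d (x (pi k)) (z k) < r) ->
    (forall F : nat -> R, finsum K (fun k => w' k * F (pi k)) = finsum N (fun j => w j * F j)) ->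
    U (atomic K w' z).

Lemma weak_open_atomic_nbhd U mu : mcompact X d -> weak_open X d U -> U mu ->
  exists N x w r, atomic_nbhd U N x w r.
Proof.
  intros Hc [HU1 HU2] Hmu. destruct (HU2 mu Hmu) as [eps [He [k [gs [Hgs Hnb]]]]].
  assert (Hb : forall i, (i < k)%nat -> exists M, forall x, Rabs (gs i x) <= M)
    by (intros; apply (mcompact_rcontinuous_bounded d); auto).
  destruct (integral_weighted_points d mu k gs (eps / 4) (HU1 mu Hmu) ltac:(lra) Hgs Hb)
    as [N [xs [w [Hw [Hs Happrox]]]]].
  destruct (radius_forall_lt k (fun i r => forall j y, (j < N)%nat -> d (xs j) y < r ->
                                   Rabs (gs i (xs j) - gs i y) < eps / 4)) as [r [Hr HR]].
  { intros m r r' H [H1 H2] j y Hj Hy. apply H; auto. lra. }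
  { intros i Hi.
    destruct (radius_forall_lt N (fun j r => forall y, d (xs j) y < r ->
                                      Rabs (gs i (xs j) - gs i y) < eps / 4)) as [r [Hr H]].
    - intros m r0 r' H [H1 H2] y Hy. apply H. lra.
    - intros j Hj. apply (Hgs i Hi (xs j) (eps / 4)). lra.
    - exists r. split; auto. }
  exists N, xs, w, r. split; [auto | split; [auto | split; [auto |]]].
  intros K w' z pi Hw' Hpi HF.
  assert (H1 : finsum K w' = 1).
  { rewrite <- Hs. specialize (HF (fun _ => 1)).
    rewrite (finsum_ext K w' (fun k => w' k * 1)), HF by (intros; ring).
    apply finsum_ext; intros; ring. }
  apply (Hnb _ (atomic_prob d K w' z Hw' H1)). intros i Hi Inu Imu Hnu Hmu'.
  destruct (Hb i Hi) as [M HM].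
  rewrite (integral_atomic d K w' z (gs i) M Hw' H1 (Hgs i Hi) HM Inu Hnu).
  specialize (Happrox i Imu Hi Hmu').
  assert (W : Rabs (finsum K (fun k => w' k * gs i (z k)) -
                    finsum K (fun k => w' k * gs i (xs (pi k)))) <= eps / 4).
  { apply finsum_wavg_close; auto. intros kk Hk. destruct (Hpi kk Hk) as [Hp1 Hp2].
    rewrite Rabs_minus_sym. left. apply HR; auto. }
  rewrite (HF (fun j => gs i (xs j))) in W. rewrite Rabs_minus_sym in Happrox.
  pose proof (Rabs_sub_triang (finsum K (fun k => w' k * gs i (z k)))
                (finsum N (fun j => w j * gs i (xs j))) Imu).
  lra.
Qed.

End AtomicNeighbourhoods.

(** * Weak mixing of the induced system *)

Lemma comp_push {X : Type} (f : nat -> X -> X) n mu :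
  Defs.comp (fun k => push (f k)) n mu = fun A => mu (fun x => A (Defs.comp f n x)).
Proof. induction n; simpl; [reflexivity |]. unfold push at 1. rewrite IHn. reflexivity. Qed.

Lemma weak_mixing_top_transitive {T : Type} (isopen : (T -> Prop) -> Prop) g :
  weak_mixing isopen g -> top_transitive isopen g.
Proof.
  intros HW U V HU HV HUn HVn.
  destruct (HW U U V V HU HU HV HV HUn HUn HVn HVn) as [n [Hn [H _]]]. eauto.
Qed.

Section Dynamics.
Context {X : Type} (d : X -> X -> R) (f : nat -> X -> X).
Hypothesis Hm : is_metric X d.
Hypothesis Hf : forall n, (1 <= n)%nat -> mcontinuous X d (f n).
Hypothesis Hcomm : forall i j x, (1 <= i)%nat -> (1 <= j)%nat -> f i (f j x) = f j (f i x).

Lemma comp_mcontinuous n : mcontinuous X d (Defs.comp f n).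
Proof.
  induction n; simpl.
  - intros x e He. exists e; split; auto.
  - intros x e He. destruct (Hf (S n) ltac:(lia) (Defs.comp f n x) e He) as [d1 [Hd1 H1]].
    destruct (IHn x d1 Hd1) as [d2 [Hd2 H2]]. exists d2. split; auto.
Qed.

Lemma f_comp_comm i k x : (1 <= i)%nat -> f i (Defs.comp f k x) = Defs.comp f k (f i x).
Proof. intros Hi. induction k; simpl; auto. rewrite Hcomm, IHk by lia. auto. Qed.

Lemma comp_comm n k x : Defs.comp f n (Defs.comp f k x) = Defs.comp f k (Defs.comp f n x).
Proof. induction n; simpl; auto. rewrite IHn, f_comp_comm by lia. auto. Qed.

Lemma mopen_and (A B : X -> Prop) : mopen X d A -> mopen X d B -> mopen X d (fun x => A x /\ B x).
Proof.
  intros HA HB x [Ha Hb]. destruct (HA x Ha) as [e1 [He1 H1]], (HB x Hb) as [e2 [He2 H2]].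
  exists (Rmin e1 e2). split; [apply Rmin_glb_lt; auto |]. intros y Hy.
  pose proof (Rmin_l e1 e2). pose proof (Rmin_r e1 e2). split; [apply H1 | apply H2]; lra.
Qed.

Lemma mopen_ball c r : mopen X d (fun y => d c y < r).
Proof.
  intros x Hx. exists (r - d c x). split; [lra |]. intros y Hy.
  destruct Hm as [_ [_ [_ Ht]]]. specialize (Ht c x y). lra.
Qed.

Lemma ball_center c r : 0 < r -> d c c < r.
Proof. destruct Hm as [_ [H _]]. rewrite (proj2 (H c c) eq_refl). auto. Qed.

Definition open_pair (p : (X -> Prop) * (X -> Prop)) : Prop :=
  mopen X d (fst p) /\ mopen X d (snd p) /\ (exists x, fst p x) /\ (exists y, snd p y).

(* Weak mixing handles two pairs at once; the first two pairs [(U1,V1), (U2,V2)] of the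
   list are merged into [(U1 /\ f^-k U2, V1 /\ f^-k V2)] for a time [k] given by weak
   mixing, and commutativity moves [f^k] past [f^n] afterwards. *)
Lemma weak_mixing_finite : weak_mixing (mopen X d) f ->
  forall N (l : list ((X -> Prop) * (X -> Prop))),
  (length l <= N)%nat -> (forall p, In p l -> open_pair p) ->
  exists n, (1 <= n)%nat /\ forall p, In p l -> exists x, fst p x /\ snd p (Defs.comp f n x).
Proof.
  intros HW N. induction N; intros l Hl Hg.
  - destruct l; simpl in Hl; [| lia]. exists 1%nat. split; auto. intros p [].
  - destruct l as [| p1 [| p2 rest]].
    + exists 1%nat. split; auto. intros p [].
    + destruct (Hg p1 (or_introl eq_refl)) as [A1 [A2 [A3 A4]]].
      destruct (HW _ _ _ _ A1 A1 A2 A2 A3 A3 A4 A4) as [n [Hn [H1 _]]].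
      exists n. split; auto. intros p [<- | []]. auto.
    + destruct (Hg p1 (or_introl eq_refl)) as [A1 [A2 [A3 A4]]].
      destruct (Hg p2 (or_intror (or_introl eq_refl))) as [B1 [B2 [B3 B4]]].
      destruct (HW _ _ _ _ A1 A2 B1 B2 A3 A4 B3 B4)
        as [k [Hk [[a [Ha1 Ha2]] [b [Hb1 Hb2]]]]].
      set (q := (fun x => fst p1 x /\ fst p2 (Defs.comp f k x),
                 fun y => snd p1 y /\ snd p2 (Defs.comp f k y))).
      destruct (IHN (q :: rest)) as [n [Hn H]].
      * simpl in *. lia.
      * intros p [<- | Hp]; [| apply Hg; simpl; auto].
        unfold q, open_pair; simpl.
        split; [| split; [| split]].
        -- apply mopen_and, mopen_preimage; auto using comp_mcontinuous.
        -- apply mopen_and, mopen_preimage; auto using comp_mcontinuous.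
        -- exists a; auto.
        -- exists b; auto.
      * exists n. split; auto.
        destruct (H q (or_introl eq_refl)) as [x [[H1 H2] [H3 H4]]].
        intros p [<- | [<- | Hp]]; [eauto | | apply H; simpl; auto].
        exists (Defs.comp f k x). rewrite comp_comm. auto.
Qed.

(* The measure [sum_(j,l) w j v l delta_(Z j l)] lies in [U] because its atoms sit near
   the [x j], and its image under [f^n] lies in [V] because theirs sit near the [y l]. *)
Lemma atomic_transfer U V N x w r M y v s rho n Z :
  atomic_nbhd d U N x w r -> atomic_nbhd d V M y v s -> rho <= r -> rho <= s ->
  (forall j l, (j < N)%nat -> (l < M)%nat ->
     d (x j) (Z j l) < rho /\ d (y l) (Defs.comp f n (Z j l)) < rho) ->
  exists mu, U mu /\ V (Defs.comp (fun k => push (f k)) n mu).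
Proof.
  intros [Hw [Hs [Hr HU]]] [Hv [Hs' [Hr' HV]]] H1 H2 HZ.
  assert (HM0 : (0 < M)%nat) by (destruct M; simpl in Hs'; lra || lia).
  exists (atomic (N * M) (fun k => w (k / M)%nat * v (k mod M)%nat)
                 (fun k => Z (k / M)%nat (k mod M)%nat)).
  assert (Hd : forall k, (k < N * M)%nat -> (k / M < N)%nat /\ (k mod M < M)%nat).
  { intros k Hk. split; [apply Nat.Div0.div_lt_upper_bound; lia | apply Nat.mod_upper_bound; lia]. }
  assert (Hnn : forall k, (k < N * M)%nat -> 0 <= w (k / M)%nat * v (k mod M)%nat).
  { intros k Hk. destruct (Hd k Hk). apply Rmult_le_pos; auto. }
  split.
  - apply (HU _ _ _ (fun k => (k / M)%nat)); auto.
    + intros k Hk. destruct (Hd k Hk) as [Hj Hl]. destruct (HZ _ _ Hj Hl). split; [auto | lra].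
    + intros F. rewrite (finsum_pairs N M (fun j l => w j * v l * F j)) by auto.
      apply finsum_ext. intros j Hj.
      rewrite (finsum_ext M _ (fun l => (w j * F j) * v l)), finsum_scal, Hs' by (intros; ring).
      ring.
  - rewrite comp_push.
    change (V (atomic (N * M) (fun k => w (k / M)%nat * v (k mod M)%nat)
                      (fun k => Defs.comp f n (Z (k / M)%nat (k mod M)%nat)))).
    apply (HV _ _ _ (fun k => (k mod M)%nat)); auto.
    + intros k Hk. destruct (Hd k Hk) as [Hj Hl]. destruct (HZ _ _ Hj Hl). split; [auto | lra].
    + intros F. rewrite (finsum_pairs N M (fun j l => w j * v l * F l)), finsum_swap by auto.
      apply finsum_ext. intros l Hl.
      rewrite (finsum_ext N _ (fun j => (v l * F l) * w j)), finsum_scal, Hs by (intros; ring).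
      ring.
Qed.

Definition ball_pairs rho (x : nat -> X) N (y : nat -> X) M : list ((X -> Prop) * (X -> Prop)) :=
  flat_map (fun j => map (fun l => ((fun z => d (x j) z < rho), (fun z => d (y l) z < rho)))
                         (seq 0 M)) (seq 0 N).

Lemma ball_pairs_open rho x N y M p : 0 < rho -> In p (ball_pairs rho x N y M) -> open_pair p.
Proof.
  intros Hr. unfold ball_pairs. rewrite in_flat_map. intros [j [_ Hp]].
  rewrite in_map_iff in Hp. destruct Hp as [l [<- _]].
  split; [| split; [| split]]; simpl; try apply mopen_ball.
  - exists (x j). apply ball_center; auto.
  - exists (y l). apply ball_center; auto.
Qed.

Lemma in_ball_pairs rho x N y M j l : (j < N)%nat -> (l < M)%nat ->
  In ((fun z => d (x j) z < rho), (fun z => d (y l) z < rho)) (ball_pairs rho x N y M).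
Proof.
  intros Hj Hl. unfold ball_pairs. rewrite in_flat_map. exists j.
  split; [apply in_seq; lia |]. apply in_map_iff. exists l. split; auto. apply in_seq; lia.
Qed.

Lemma ball_pairs_hit rho x N y M n :
  (forall p, In p (ball_pairs rho x N y M) -> exists z, fst p z /\ snd p (Defs.comp f n z)) ->
  inhabited X ->
  exists Z, forall j l, (j < N)%nat -> (l < M)%nat ->
    d (x j) (Z j l) < rho /\ d (y l) (Defs.comp f n (Z j l)) < rho.
Proof.
  intros H [x0].
  destruct (partial_choice x0 (fun (jl : nat * nat) z =>
              d (x (fst jl)) z < rho /\ d (y (snd jl)) (Defs.comp f n z) < rho)) as [Z HZ].
  exists (fun j l => Z (j, l)). intros j l Hj Hl.
  apply (HZ (j, l)), (H _ (in_ball_pairs rho x N y M j l Hj Hl)).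
Qed.

Theorem weak_mixing_push : mcompact X d ->
  weak_mixing (mopen X d) f -> weak_mixing (weak_open X d) (fun n => push (f n)).
Proof.
  intros Hc HW U1 U2 V1 V2 HU1 HU2 HV1 HV2 [m1 Hm1] [m2 Hm2] [n1 Hn1] [n2 Hn2].
  destruct (weak_open_atomic_nbhd d U1 m1 Hc HU1 Hm1) as [N1 [x1 [w1 [r1 A1]]]].
  destruct (weak_open_atomic_nbhd d U2 m2 Hc HU2 Hm2) as [N2 [x2 [w2 [r2 A2]]]].
  destruct (weak_open_atomic_nbhd d V1 n1 Hc HV1 Hn1) as [M1 [y1 [v1 [s1 B1]]]].
  destruct (weak_open_atomic_nbhd d V2 n2 Hc HV2 Hn2) as [M2 [y2 [v2 [s2 B2]]]].
  pose proof A1 as [_ [_ [Hr1 _]]]. pose proof A2 as [_ [_ [Hr2 _]]].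
  pose proof B1 as [_ [_ [Hs1 _]]]. pose proof B2 as [_ [_ [Hs2 _]]].
  set (rho := Rmin (Rmin r1 s1) (Rmin r2 s2)).
  assert (Hrho : 0 < rho) by (repeat apply Rmin_glb_lt; auto).
  assert (Hsmall : rho <= r1 /\ rho <= s1 /\ rho <= r2 /\ rho <= s2).
  { unfold rho. pose proof (Rmin_l (Rmin r1 s1) (Rmin r2 s2)).
    pose proof (Rmin_r (Rmin r1 s1) (Rmin r2 s2)).
    pose proof (Rmin_l r1 s1). pose proof (Rmin_r r1 s1).
    pose proof (Rmin_l r2 s2). pose proof (Rmin_r r2 s2). lra. }
  set (L := ball_pairs rho x1 N1 y1 M1 ++ ball_pairs rho x2 N2 y2 M2).
  destruct (weak_mixing_finite HW (length L) L (le_n _)) as [n [Hn H]].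
  { intros p Hp. apply in_app_or in Hp as [Hp | Hp]; eapply ball_pairs_open; eauto. }
  assert (HX : inhabited X) by (apply (prob_inhabited d m1), HU1; auto).
  destruct (ball_pairs_hit rho x1 N1 y1 M1 n) as [Z1 HZ1]; [intros; apply H, in_or_app; auto | auto |].
  destruct (ball_pairs_hit rho x2 N2 y2 M2 n) as [Z2 HZ2]; [intros; apply H, in_or_app; auto | auto |].
  exists n. split; [auto | split].
  - apply (atomic_transfer U1 V1 N1 x1 w1 r1 M1 y1 v1 s1 rho n Z1); tauto.
  - apply (atomic_transfer U2 V2 N2 x2 w2 r2 M2 y2 v2 s2 rho n Z2); tauto.
Qed.

End Dynamics.

(** * From transitivity of the induced system to weak mixing *)

Lemma Rmax0_lipschitz a b : Rabs (Rmax 0 a - Rmax 0 b) <= Rabs (a - b).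
Proof.
  unfold Rmax. destruct (Rle_dec 0 a), (Rle_dec 0 b); unfold Rabs;
    repeat match goal with |- context [Rcase_abs ?x] => destruct (Rcase_abs x) end; lra.
Qed.

Section Transitivity.
Context {X : Type} (d : X -> X -> R) (f : nat -> X -> X).
Hypothesis Hm : is_metric X d.
Hypothesis Hf : forall n, (1 <= n)%nat -> mcontinuous X d (f n).
Hypothesis Hcomm : forall i j x, (1 <= i)%nat -> (1 <= j)%nat -> f i (f j x) = f j (f i x).

Definition bump c rho : X -> R := fun x => Rmax 0 (1 - d c x / rho).

Lemma bump_bounds c rho x : 0 < rho -> 0 <= bump c rho x <= 1.
Proof.
  intros Hr. unfold bump. destruct Hm as [Hd _].
  assert (0 <= d c x / rho) by (apply Rmult_le_pos; [auto | left; apply Rinv_0_lt_compat; auto]).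
  unfold Rmax. destruct (Rle_dec 0 (1 - d c x / rho)); lra.
Qed.

Lemma bump_abs c rho x : 0 < rho -> Rabs (bump c rho x) <= 1.
Proof. intros Hr. pose proof (bump_bounds c rho x Hr). rewrite Rabs_pos_eq; lra. Qed.

Lemma bump_center c rho : 0 < rho -> bump c rho c = 1.
Proof.
  intros Hr. unfold bump. destruct Hm as [_ [H _]]. rewrite (proj2 (H c c) eq_refl).
  unfold Rdiv. rewrite Rmult_0_l, Rminus_0_r. unfold Rmax. destruct (Rle_dec 0 1); lra.
Qed.

Lemma bump_pos_ball c rho x : 0 < rho -> 0 < bump c rho x -> d c x < rho.
Proof.
  intros Hr. unfold bump, Rmax. destruct (Rle_dec 0 (1 - d c x / rho)); intros H; [| lra].
  apply (Rmult_lt_reg_r (/ rho)); [apply Rinv_0_lt_compat; auto |].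
  rewrite Rinv_r by lra. unfold Rdiv in H. lra.
Qed.

Lemma bump_rcontinuous c rho : 0 < rho -> rcontinuous X d (bump c rho).
Proof.
  intros Hr x e He. exists (e * rho). split; [apply Rmult_lt_0_compat; auto |].
  intros y Hy. unfold bump. eapply Rle_lt_trans; [apply Rmax0_lipschitz |].
  replace (1 - d c x / rho - (1 - d c y / rho)) with ((d c y - d c x) / rho) by (field; lra).
  unfold Rdiv. rewrite Rabs_mult, (Rabs_pos_eq (/ rho)) by (left; apply Rinv_0_lt_compat; auto).
  destruct Hm as [_ [_ [Hs Ht]]].
  assert (Rabs (d c y - d c x) <= d x y).
  { apply Rabs_le. pose proof (Ht c x y). pose proof (Ht c y x). rewrite (Hs y x) in *. lra. }
  apply (Rmult_lt_reg_r rho); auto. rewrite Rmult_assoc, Rinv_l, Rmult_1_r by lra. lra.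
Qed.

Lemma weak_open_integrals_gt g h c :
  rcontinuous X d g -> (forall x, Rabs (g x) <= 1) ->
  rcontinuous X d h -> (forall x, Rabs (h x) <= 1) ->
  weak_open X d (fun mu => is_prob X d mu /\ (forall I, integral X d mu g I -> c < I) /\
                                              (forall I, integral X d mu h I -> c < I)).
Proof.
  intros Hg Hbg Hh Hbh. split; [intros mu [H _]; auto |].
  intros mu [Hp [H1 H2]].
  destruct (integral_exists d mu g 1 Hp Hbg) as [I1 HI1].
  destruct (integral_exists d mu h 1 Hp Hbh) as [I2 HI2].
  specialize (H1 I1 HI1). specialize (H2 I2 HI2).
  pose proof (Rmin_l (I1 - c) (I2 - c)). pose proof (Rmin_r (I1 - c) (I2 - c)).
  exists (Rmin (I1 - c) (I2 - c)). split; [apply Rmin_glb_lt; lra |].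
  exists 2%nat, (fun i => if Nat.eqb i 0 then g else h).
  split; [intros i Hi; destruct (Nat.eqb i 0); auto |].
  intros nu Hnu Hc. split; [auto | split]; intros I HI.
  - destruct (Rabs_def2 _ _ (Hc O ltac:(lia) I I1 HI HI1)). lra.
  - destruct (Rabs_def2 _ _ (Hc 1%nat ltac:(lia) I I2 HI HI2)). lra.
Qed.

(* Since [bump a ra + bump b rb o T <= 1] wherever [x] or [T x] leaves the balls, the two
   integrals could not exceed [2/3] and [1/3] if no point went from one ball to the other. *)
Lemma push_bumps_meet mu T a ra b rb IA IB : 0 < ra -> 0 < rb ->
  is_prob X d mu -> mcontinuous X d T ->
  integral X d mu (bump a ra) IA -> integral X d (fun A => mu (fun x => A (T x))) (bump b rb) IB ->
  2 / 3 < IA -> 1 / 3 < IB -> exists x, d a x < ra /\ d b (T x) < rb.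
Proof.
  intros Hra Hrb Hp HT HIA HIB HA HB. apply NNPP. intros Hno.
  assert (Hle : forall x, bump a ra x + bump b rb (T x) <= 1).
  { intros x. pose proof (bump_bounds a ra x Hra). pose proof (bump_bounds b rb (T x) Hrb).
    destruct (Rle_lt_dec (bump a ra x) 0); [lra |].
    destruct (Rle_lt_dec (bump b rb (T x)) 0); [lra |].
    exfalso. apply Hno. exists x. split; apply bump_pos_ball; auto. }
  pose proof (integral_add_push_le1 d mu T _ _ IA IB Hp HT Hle HIA HIB). lra.
Qed.

(* Transitivity applied to the open sets "near delta_a" and "near (delta_b + delta_c)/2". *)
Lemma transitive_push_three : top_transitive (weak_open X d) (fun n => push (f n)) ->
  forall A B C, mopen X d A -> mopen X d B -> mopen X d C ->
  (exists x, A x) -> (exists x, B x) -> (exists x, C x) ->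
  exists n, (1 <= n)%nat /\ (exists x, A x /\ B (Defs.comp f n x)) /\
                            (exists x, A x /\ C (Defs.comp f n x)).
Proof.
  intros HT A B C HA HB HC [a Ha] [b Hb] [c Hc].
  destruct (HA a Ha) as [ra [Hra HA']], (HB b Hb) as [rb [Hrb HB']], (HC c Hc) as [rc [Hrc HC']].
  pose proof (bump_rcontinuous a ra Hra) as cA. pose proof (fun x => bump_abs a ra x Hra) as bA.
  pose proof (bump_rcontinuous b rb Hrb) as cB. pose proof (fun x => bump_abs b rb x Hrb) as bB.
  pose proof (bump_rcontinuous c rc Hrc) as cC. pose proof (fun x => bump_abs c rc x Hrc) as bC.
  set (half := fun _ : nat => 1 / 2). set (bc := fun k => if Nat.eqb k 0 then b else c).
  assert (Hhalf : (forall k, (k < 2)%nat -> 0 <= half k) /\ finsum 2 half = 1)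
    by (unfold half; simpl; split; intros; lra).
  destruct (HT _ _ (weak_open_integrals_gt _ _ (2 / 3) cA bA cA bA)
                   (weak_open_integrals_gt _ _ (1 / 3) cB bB cC bC))
    as [n [Hn [mu [[Hp [HmuA _]] [Hp' [HmuB HmuC]]]]]].
  - assert (Hone : forall k, (k < 1)%nat -> 0 <= 1) by (intros; lra).
    exists (atomic 1 (fun _ => 1) (fun _ => a)).
    split; [apply atomic_prob; auto; simpl; lra |].
    split; intros I HI; rewrite (integral_atomic d 1 _ _ _ 1 Hone ltac:(simpl; lra) cA bA I HI);
      simpl; rewrite bump_center; lra.
  - exists (atomic 2 half bc). split; [apply atomic_prob; tauto | split]; intros I HI.
    + rewrite (integral_atomic d 2 _ _ _ 1 (proj1 Hhalf) (proj2 Hhalf) cB bB I HI).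
      simpl. unfold bc, half; simpl. rewrite bump_center; auto. pose proof (bump_bounds b rb c Hrb). lra.
    + rewrite (integral_atomic d 2 _ _ _ 1 (proj1 Hhalf) (proj2 Hhalf) cC bC I HI).
      simpl. unfold bc, half; simpl. rewrite bump_center; auto. pose proof (bump_bounds c rc b Hrc). lra.
  - rewrite comp_push in Hp', HmuB, HmuC.
    pose proof (comp_mcontinuous d f Hf n) as HTn.
    destruct (integral_exists d mu _ 1 Hp bA) as [IA HIA].
    destruct (integral_exists d _ _ 1 Hp' bB) as [IB HIB].
    destruct (integral_exists d _ _ 1 Hp' bC) as [IC HIC].
    exists n. split; [auto | split].
    + destruct (push_bumps_meet mu (Defs.comp f n) a ra b rb IA IB) as [x [Hx1 Hx2]]; auto. eauto.
    + destruct (push_bumps_meet mu (Defs.comp f n) a ra c rc IA IC) as [x [Hx1 Hx2]]; auto. eauto.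
Qed.

Theorem transitive_push_weak_mixing :
  top_transitive (weak_open X d) (fun n => push (f n)) -> weak_mixing (mopen X d) f.
Proof.
  intros HT U1 U2 V1 V2 HU1 HU2 HV1 HV2 HU1n HU2n HV1n HV2n.
  destruct (transitive_push_three HT U1 U2 V2 HU1 HU2 HV2 HU1n HU2n HV2n)
    as [k [Hk [[x [Hx1 Hx2]] [x' [Hx1' Hx2']]]]].
  pose proof (comp_mcontinuous d f Hf k) as HTk.
  assert (HW1 : mopen X d (fun y => U1 y /\ U2 (Defs.comp f k y)))
    by (apply (mopen_and d); [| apply mopen_preimage]; auto).
  assert (HW2 : mopen X d (fun y => V2 (Defs.comp f k y))) by (apply mopen_preimage; auto).
  destruct (transitive_push_three HT _ V1 _ HW1 HV1 HW2 ltac:(eauto) HV1n ltac:(eauto))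
    as [n [Hn [[p [[Hp1 Hp2] Hp3]] [q [[Hq1 Hq2] Hq3]]]]].
  exists n. split; [auto | split]; [eauto |].
  exists (Defs.comp f k q). rewrite (comp_comm f Hcomm). auto.
Qed.

End Transitivity.

Theorem theorem3p5 (X : Type) (d : X -> X -> R) (f : nat -> X -> X) :
  is_metric X d ->
  mcompact X d ->
  (forall n, (1 <= n)%nat -> mcontinuous X d (f n)) ->
  (forall i j x, (1 <= i)%nat -> (1 <= j)%nat -> f i (f j x) = f j (f i x)) ->
  (weak_mixing (mopen X d) f <->
     weak_mixing (weak_open X d) (fun n => push (f n))) /\
  (weak_mixing (weak_open X d) (fun n => push (f n)) <->
     top_transitive (weak_open X d) (fun n => push (f n))).
Proof.
  intros Hm Hc Hf Hcomm.
  pose proof (weak_mixing_push d f Hm Hf Hcomm Hc) as W12.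
  pose proof (@weak_mixing_top_transitive _ (weak_open X d) (fun n => push (f n))) as W23.
  pose proof (transitive_push_weak_mixing d f Hm Hf Hcomm) as T31.
  tauto.
Qed.
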